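(* Let $K$ be a $15$-vertex $\mathbb{F}_2$-homology $8$-manifold that satisfies complementarity. Then $K$ has exactly $490$ eight-dimensional simplices.
   Context: A finite simplicial complex $K$ on vertex set $V$ is an $\mathbb{F}_2$-homology $d$-manifold if every simplex lies in a $d$-simplex and for every nonempty simplex $\sigma$ with $\dim\sigma<d$, $H_*(\mathrm{link}(\sigma,K);\mathbb{F}_2)\cong H_*(S^{d-\dim\sigma-1};\mathbb{F}_2)$, where $\mathrm{link}(\sigma,K)=\{\tau\in K:\tau\cap\sigma=\varnothing,\ \tau\cup\sigma\in K\}$. $K$ satisfies complementarity if for every $\sigma\subseteq V$ exactly one of $\sigma$, $V\setminus\sigma$ is a simplex of $K$. *)

From HB Require Import structures.
From mathcomp Require Import all_boot all_algebra.
Set Implicit Arguments. Unset Strict Implicit. Unset Printing Implicit Defensive.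
Import GRing.Theory.
Local Open Scope ring_scope.

Section Simplicial.
Variable V : finType.

(* An abstract simplicial complex on vertex set V: a downward-closed family
   of subsets of V containing every vertex {v}.  Simplices are sets; the
   dimension of sigma is #|sigma| - 1. *)
Definition simplicial_complex (K : {set {set V}}) : Prop :=
  (forall s t : {set V}, s \in K -> t \subset s -> t \in K) /\
  (forall v : V, [set v] \in K).

Definition link (s : {set V}) (K : {set {set V}}) : {set {set V}} :=
  [set t in K | [disjoint t & s] && ((t :|: s) \in K)].

Definition faces (L : {set {set V}}) (k : nat) : {set {set V}} :=
  [set s in L | #|s| == k]%N.

(* mod-2 boundary map from faces with k+1 vertices to faces with k vertices
   (matrix acting on row vectors) *)
Definition bdry (L : {set {set V}}) (k : nat)
  : 'M['F_2]_(#|faces L k.+1|, #|faces L k|) :=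
  \matrix_(i, j)
    (((@enum_val _ (mem (faces L k)) j : {set V}) \subset
      (@enum_val _ (mem (faces L k.+1)) i : {set V})) : bool)%:R.

(* i-th (unreduced) simplicial Betti number of L over F_2:
   dim C_i - rank d_i - rank d_{i+1}, with d_0 = 0. *)
Definition betti2 (L : {set {set V}}) (i : nat) : nat :=
  (#|faces L i.+1| - (if i is 0 then 0 else \rank (bdry L i))
                   - \rank (bdry L i.+1))%N.

(* H_*(L;F_2) = H_*(S^m;F_2) as graded F_2-vector spaces (finite dim),
   i.e. equal Betti numbers in every degree. *)
Definition F2_homology_sphere_like (L : {set {set V}}) (m : nat) : Prop :=
  forall i : nat, betti2 L i = ((i == 0%N) + (i == m))%N.

Definition F2_homology_manifold (K : {set {set V}}) (d : nat) : Prop :=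
  simplicial_complex K /\
  (forall s, s \in K -> exists2 t, t \in K & (s \subset t) && (#|t| == d.+1)%N) /\
  (forall s, s \in K -> s != set0 -> (#|s| <= d)%N ->
     F2_homology_sphere_like (link s K) (d - #|s|)%N).

Definition complementarity (K : {set {set V}}) : Prop :=
  forall s : {set V}, (s \in K) != (~: s \in K).

End Simplicial.

(* Write f_k for the number of faces with k vertices.  Links of faces with 8
   vertices are F_2-homology 0-spheres and links of faces with 6 vertices are
   F_2-homology 2-spheres, so the Euler-Poincare formula for these links,
   summed over the faces by double counting face/coface pairs, gives the
   Dehn-Sommerville relations 9 f_9 = 2 f_8 and 7 f_7 - 28 f_8 + 84 f_9 = 2 f_6.
   Complementarity matches the faces with k vertices with the non-faces with
   15 - k vertices, so f_6 + f_9 = C(15,6) and f_7 + f_8 = C(15,7).  This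
   linear system forces f_9 = 490. *)

From mathcomp Require Import all_boot all_algebra zify ring.
Set Implicit Arguments. Unset Strict Implicit. Unset Printing Implicit Defensive.
Import GRing.Theory.

Section Complexes.
Variable V : finType.
Implicit Types (K L : {set {set V}}) (s t tau : {set V}).

Definition down_closed L := forall s t, s \in L -> t \subset s -> t \in L.

Lemma down_closed_link K tau : down_closed K -> down_closed (link tau K).
Proof.
move=> dK t u; rewrite !inE => /and3P[tK dt_tau tUK] ut.
rewrite (dK _ _ tK ut) (disjointWl ut dt_tau) /=.
by apply: dK tUK _; rewrite setSU.
Qed.

Lemma sum_nat_of_bool (A : {pred {set V}}) (P : pred {set V}) :
  \sum_(s in A) P s = #|[set s in A | P s]|.
Proof.
rewrite (eq_bigr (fun s => if P s then 1 else 0)) => [|s _]; last by case: (P s).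
by rewrite -big_mkcondr sum1dep_card.
Qed.

Lemma card_faces_between L k s tau : down_closed L ->
  s \in faces L k.+2 -> tau \in faces L k ->
  #|[set r in faces L k.+1 | (r \subset s) && (tau \subset r)]| =
  if tau \subset s then 2 else 0.
Proof.
move=> dL; rewrite !inE => /andP[sL /eqP cs] /andP[_ /eqP ct].
have [ts|nts] := boolP (tau \subset s); last first.
  apply/eqP; rewrite cards_eq0; apply/eqP/setP => r; rewrite !inE.
  by apply/negP => /and3P[_ rs tr]; rewrite (subset_trans tr rs) in nts.
have -> : [set r in faces L k.+1 | (r \subset s) && (tau \subset r)] =
          [set x |: tau | x in s :\: tau].
  apply/setP => r; rewrite !inE; apply/idP/imsetP => [|[x]].
  - case/andP=> /andP[_ /eqP cr] /andP[rs tr].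
    have /cards1P[x rx] : #|r :\: tau| == 1 by rewrite cardsD (setIidPr tr); lia.
    have /setDP[xr xt] : x \in r :\: tau by rewrite rx set11.
    exists x; first by rewrite !inE xt (subsetP rs).
    by rewrite -rx setUC -{1}(setID r tau) (setIidPr tr).
  - rewrite !inE => /andP[xt xs] ->.
    have xts : x |: tau \subset s by rewrite subUset sub1set xs ts.
    by rewrite cardsU1 xt ct (dL _ _ sL xts) xts subsetU1 eqxx.
rewrite card_in_imset ?cardsD ?(setIidPr ts); first lia.
move=> x y /setDP[_ xt] /setDP[_ yt] /setP/(_ x).
by rewrite !inE eqxx (negbTE xt) => /esym/orP[/eqP|].
Qed.

Lemma bdry_mulmx_eq0 L k : down_closed L -> (bdry L k.+1 *m bdry L k = 0)%R.
Proof.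
move=> dL; apply/matrixP => i j; rewrite !mxE.
under eq_bigr => r _ do rewrite !mxE -natrM mulnb.
rewrite -natr_sum.
rewrite -(big_enum_val (fun r : {set V} => (r \subset enum_val i) && (enum_val j \subset r) : nat)).
(* the entry counts the 0 or 2 faces between the two simplices, and 2 = 0 in F_2 *)
by rewrite sum_nat_of_bool card_faces_between ?enum_valP //; case: ifP => _; apply/eqP.
Qed.

Lemma card_link_faces K tau j k : down_closed K -> tau \in faces K j ->
  #|faces (link tau K) k| = #|[set s in faces K (j + k) | tau \subset s]|.
Proof.
move=> dK; rewrite inE => /andP[_ /eqP ct].
have setUDK t : [disjoint t & tau] -> (t :|: tau) :\: tau = t.
  by move=> /setDidPl dt; rewrite setDUl setDv setU0.
have -> : [set s in faces K (j + k) | tau \subset s] =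
          [set t :|: tau | t in faces (link tau K) k].
  apply/setP => s; rewrite !inE; apply/idP/imsetP => [|[t]].
  - case/andP=> /andP[sK /eqP cs] ts.
    have /subsetDP[sDs dst] := subxx (s :\: tau).
    have sE : s :\: tau :|: tau = s by rewrite setUC -{2}(setID s tau) (setIidPr ts).
    exists (s :\: tau); last by [].
    rewrite !inE (dK _ _ sK sDs) dst sE sK cardsD (setIidPr ts) cs ct /=.
    by apply/eqP; lia.
  - rewrite !inE => /andP[/and3P[_ dt tK'] /eqP ct'] ->.
    by rewrite tK' subsetUr cardsU (disjoint_setI0 dt) cards0 ct ct' andbT; apply/eqP; lia.
rewrite card_in_imset // => t u; rewrite !inE => /andP[/and3P[_ dt _] _].
by move=> /andP[/and3P[_ du _] _] tu; rewrite -(setUDK t dt) tu setUDK.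
Qed.

Lemma sum_card_link_faces K j k : down_closed K ->
  \sum_(tau in faces K j) #|faces (link tau K) k| = 'C(j + k, j) * #|faces K (j + k)|.
Proof.
move=> dK; under eq_bigr => tau tauF do
  rewrite (card_link_faces k dK tauF) -(sum_nat_of_bool _ (fun s => tau \subset s)).
rewrite exchange_big /= mulnC -sum_nat_const.
apply: eq_bigr => s; rewrite inE => /andP[sK /eqP cs].
rewrite sum_nat_of_bool -cs -cards_draws; apply: eq_card => t; rewrite !inE.
apply/andP/andP => [[/andP[_ /eqP ->] ->] | [ts /eqP <-]] //.
by rewrite (dK _ _ sK ts) eqxx.
Qed.

Lemma complementarity_setC K s : complementarity K -> (~: s \in K) = (s \notin K).
Proof. by move/(_ s); case: (s \in K); case: (~: s \in K). Qed.

Lemma card_faces_compl K k l : complementarity K -> k + l = #|V| ->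
  #|faces K k| + #|faces K l| = 'C(#|V|, k).
Proof.
move=> cK klV; rewrite -card_draws -(cardsID K [set s : {set V} | #|s| == k]).
congr (_ + _); first by apply: eq_card => s; rewrite !inE andbC.
have -> : faces K l = @setC V @: ([set s : {set V} | #|s| == k] :\: K).
  apply/setP => s; rewrite !inE; apply/idP/imsetP => [/andP[sK /eqP cs] | [t]].
  - exists (~: s); last by rewrite setCK.
    by rewrite !inE complementarity_setC // sK cardsCs setCK cs -klV addnK eqxx.
  - rewrite !inE => /andP[tK /eqP ct] ->.
    by rewrite complementarity_setC // tK cardsCs setCK ct -klV addKn eqxx.
by rewrite card_imset //; apply: setC_inj.
Qed.

End Complexes.

Section EulerPoincare.
Variable V : finType.
Implicit Types L : {set {set V}}.
Local Open Scope ring_scope.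

Definition rank_bdry L i : nat := if i is 0 then 0 else \rank (bdry L i).

Lemma rank_bdry_leq L i : down_closed L ->
  (rank_bdry L i + rank_bdry L i.+1 <= #|faces L i.+1|)%N.
Proof.
case: i => [|i] dL /=; first exact: rank_leq_col.
have := mxrank_mul_min (bdry L i.+2) (bdry L i.+1).
by rewrite bdry_mulmx_eq0 // mxrank0 leqn0 subn_eq0 addnC.
Qed.

Lemma betti2E L i : down_closed L ->
  (betti2 L i)%:R = #|faces L i.+1|%:R - (rank_bdry L i)%:R - (rank_bdry L i.+1)%:R :> int.
Proof. by move=> dL; have := rank_bdry_leq i dL; rewrite /betti2 /rank_bdry !natz; lia. Qed.

Lemma euler_poincare L n : down_closed L -> #|faces L n.+1| = 0%N ->
  \sum_(i < n) (-1) ^+ i * #|faces L i.+1|%:R =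
  \sum_(i < n) (-1) ^+ i * (betti2 L i)%:R :> int.
Proof.
move=> dL Ln.
have rank_top : rank_bdry L n = 0%N.
  by case: n Ln => // n Ln; apply/eqP; rewrite -leqn0 -Ln rank_leq_row.
pose G i : int := (-1) ^+ i * (rank_bdry L i)%:R.
have telescope : \sum_(i < n) (G i - G i.+1) = 0.
  rewrite -(big_mkord xpredT (fun i => G i - G i.+1)).
  rewrite (telescope_sumr_eq (fun i => - G i)) => [|//|k _].
    by rewrite /G rank_top /= !mulr0 subrr.
  by rewrite opprK addrC.
transitivity (\sum_(i < n) (-1) ^+ i * #|faces L i.+1|%:R - \sum_(i < n) (G i - G i.+1)).
  by rewrite telescope subr0.
rewrite -sumrB; apply: eq_bigr => i _.
by rewrite betti2E // /G exprS; ring.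
Qed.

Lemma euler_char_sphere_like L m n : down_closed L ->
  F2_homology_sphere_like L m -> (m < n)%N -> #|faces L n.+1| = 0%N ->
  \sum_(i < n) (-1) ^+ i * #|faces L i.+1|%:R = 1 + (-1) ^+ m :> int.
Proof.
move=> dL sL mn Ln; rewrite euler_poincare //.
have sum_delta j : (j < n)%N -> \sum_(i < n) (-1) ^+ i * ((i == j :> nat) : nat)%:R = (-1) ^+ j :> int.
  move=> jn; transitivity (\sum_(i < n | i == j :> nat) (-1) ^+ i : int).
    by rewrite [RHS]big_mkcond; apply: eq_bigr => i _; case: eqP; rewrite ?mulr1 ?mulr0.
  by rewrite (big_ord1_eq _ (fun i => (-1) ^+ i)) jn.
under eq_bigr => i _ do rewrite sL natrD mulrDr.
by rewrite big_split /= !sum_delta ?(leq_ltn_trans _ mn).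
Qed.

End EulerPoincare.

Section HomologyManifold.
Variables (V : finType) (K : {set {set V}}) (d : nat).
Hypothesis KM : F2_homology_manifold K d.
Local Open Scope ring_scope.

Lemma manifold_down_closed : down_closed K.
Proof. by case: KM => [[]]. Qed.

Lemma manifold_card_simplex s : s \in K -> (#|s| <= d.+1)%N.
Proof.
case: KM => _ [pure _] /pure[t _ /andP[st /eqP <-]].
exact: subset_leq_card.
Qed.

Lemma card_link_faces_eq0 tau j k : tau \in faces K j -> (d.+1 < j + k)%N ->
  #|faces (link tau K) k| = 0%N.
Proof.
rewrite inE => /andP[_ /eqP ct] djk; apply/eqP; rewrite cards_eq0; apply/eqP/setP => t.
rewrite !inE; apply/negP => /andP[/and3P[_ dt tK] /eqP cT].
have := manifold_card_simplex tK.
by rewrite cardsU (disjoint_setI0 dt) cards0 ct cT; lia.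
Qed.

Lemma euler_char_link tau j m : tau \in faces K j.+1 -> (j + m.+1 = d)%N ->
  \sum_(i < m.+1) (-1) ^+ i * #|faces (link tau K) i.+1|%:R = 1 + (-1) ^+ m :> int.
Proof.
move=> tauF jmd; have := tauF; rewrite inE => /andP[tK /eqP ct].
have tau0 : tau != set0 by rewrite -card_gt0 ct.
case: KM => _ [_ sphere_links].
apply: euler_char_sphere_like => //.
- exact/down_closed_link/manifold_down_closed.
- have -> : m = (d - #|tau|)%N by lia.
  by apply: sphere_links; rewrite // ct; lia.
- by apply: (card_link_faces_eq0 tauF); lia.
Qed.

Lemma dehn_sommerville j m : (j + m.+1 = d)%N ->
  \sum_(i < m.+1) (-1) ^+ i * ('C(j.+1 + i.+1, j.+1) * #|faces K (j.+1 + i.+1)|)%:R =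
  (1 + (-1) ^+ m) * #|faces K j.+1|%:R :> int.
Proof.
move=> jmd; have dK := manifold_down_closed.
under eq_bigr => i _ do rewrite -(sum_card_link_faces _ _ dK) natr_sum mulr_sumr.
rewrite exchange_big /= mulr_natr -sumr_const.
by apply: eq_bigr => tau tauF; rewrite (euler_char_link tauF jmd).
Qed.

End HomologyManifold.

Theorem proposition6p2 (V : finType) (K : {set {set V}}) :
  #|V| = 15 ->
  F2_homology_manifold K 8 ->
  complementarity K ->
  #|faces K 9| = 490.
Proof.
move=> V15 KM cK.
have := card_faces_compl cK (k := 6) (l := 9) (esym V15).
have := card_faces_compl cK (k := 7) (l := 8) (esym V15).
have := dehn_sommerville KM (j := 5) (m := 2) erefl.
have := dehn_sommerville KM (j := 7) (m := 0) erefl.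
rewrite V15 !big_ord_recr !big_ord0 /= !expr0 expr1 sqrrN expr1n !natz.
rewrite -[6 + 1]/7 -[6 + 2]/8 -[6 + 3]/9 -[8 + 1]/9.
rewrite -['C(7, 6)]/7 -['C(8, 6)]/28 -['C(9, 6)]/84 -['C(9, 8)]/9.
(* nat literals above 5000 would be abstracted by the parser *)
rewrite -['C(15, 6)]/(5 * 1001) -['C(15, 7)]/(5 * 1287).
lia.
Qed.
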